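(* As formal power series in $q$, $$\sum_{n=0}^\infty \overline{bt}(2n)q^n=8q\frac{f_2^7f_4^3f_8^2}{f_1^{18}}+\frac{f_2^{17}f_4}{f_1^{22}f_8^2}.$$
   Context: For a positive integer $k$ let $f_k:=\prod_{m=1}^\infty(1-q^{mk})$. The function $\overline{bt}(n)$ is defined by $\sum_{n\ge0}\overline{bt}(n)q^n=\frac{f_4^3}{f_1^6f_2^3}$. *)

From mathcomp Require Import all_boot all_order all_algebra.
Set Implicit Arguments. Unset Strict Implicit. Unset Printing Implicit Defensive.
Import GRing.Theory Num.Theory.
Local Open Scope ring_scope.

Definition fps := nat -> int.

Definition fps_one : fps := fun n => (n == 0)%N%:R.
Definition fps_q : fps := fun n => (n == 1)%N%:R.
Definition fps_add (a b : fps) : fps := fun n => a n + b n.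
Definition fps_sub (a b : fps) : fps := fun n => a n - b n.
Definition fps_scale (c : int) (a : fps) : fps := fun n => c * a n.
Definition fps_mul (a b : fps) : fps :=
  fun n => \sum_(i < n.+1) a i * b (n - i)%N.
Definition fps_pow (a : fps) (e : nat) : fps := iter e (fps_mul a) fps_one.
(* multiplicative inverse of a series with constant term 1:
   1/a = sum_{j>=0} (1 - a)^j, where only j <= n contributes to coefficient n *)
Definition fps_inv (a : fps) : fps :=
  fun n => \sum_(j < n.+1) fps_pow (fps_sub fps_one a) j n.

(* f_k = prod_{m>=1} (1 - q^{mk}); for k >= 1 its n-th coefficient equals the
   n-th coefficient of the finite product over 1 <= m <= n. *)
Definition fk (k : nat) : fps :=
  fun n => (\prod_(1 <= m < n.+1) (1 - 'X^(m * k)%N) : {poly int})`_n.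

Definition btbar_series : fps :=
  fps_mul (fps_pow (fk 4) 3) (fps_mul (fps_pow (fps_inv (fk 1)) 6) (fps_pow (fps_inv (fk 2)) 3)).
Definition btbar (n : nat) : int := btbar_series n.

From HB Require Import structures.
From mathcomp Require Import all_boot all_algebra.
From mathcomp Require Import boolp ring zify.
Set Implicit Arguments. Unset Strict Implicit. Unset Printing Implicit Defensive.
Import GRing.Theory Num.Theory.
Local Open Scope ring_scope.

(* Let phi(q) = sum_(k in Z) q^(k^2) and psi(q) = sum_(k >= 0) q^(k(k+1)/2).
   The q-binomial theorem gives finite forms of the Jacobi triple product,
   whence phi = f2^5 / (f1^2 f4^2) and psi = f2^2 / f1.  Thus
   f4^3 / (f1^6 f2^3) = phi(q)^3 * f4^9 / f2^18, the last factor being a series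
   in q^2.  Cubing the 2-dissection phi(q) = phi(q^4) + 2 q psi(q^8), the even
   part is f2^9 / f1^18 * phi(q^2) (phi(q^2)^2 + 12 q psi(q^4)^2), and the
   identity phi(q)^2 = phi(q^2)^2 + 4 q psi(q^4)^2 turns it into
   f2^9 / f1^18 * phi(q^2) (phi(q)^2 + 8 q psi(q^4)^2), which expands into the
   two eta quotients of the statement. *)

(** * Gaussian polynomials *)

Section QBinomial.
Variable R : comNzRingType.
Implicit Types q : R.

Definition qpoch q k : R := \prod_(m < k) (1 - q ^+ m.+1).

Lemma qpoch0 q : qpoch q 0 = 1.
Proof. by rewrite /qpoch big_ord0. Qed.

Lemma qpochS q k : qpoch q k.+1 = qpoch q k * (1 - q ^+ k.+1).
Proof. by rewrite /qpoch big_ord_recr. Qed.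

Fixpoint qbinom q m i : R :=
  match m, i with
  | _, 0%N => 1
  | 0%N, _.+1 => 0
  | m'.+1, i'.+1 => qbinom q m' i'.+1 + q ^+ (m' - i') * qbinom q m' i'
  end.

Lemma qbinom0 q m : qbinom q m 0 = 1. Proof. by case: m. Qed.

Lemma qbinomSS q m i :
  qbinom q m.+1 i.+1 = qbinom q m i.+1 + q ^+ (m - i) * qbinom q m i.
Proof. by []. Qed.

Lemma qbinom_small q m i : (m < i)%N -> qbinom q m i = 0.
Proof.
elim: m i => [|m IH] [|i] //= lt_mi.
by rewrite !IH ?mulr0 ?addr0 // ltnW.
Qed.

Lemma qbinomnn q m : qbinom q m m = 1.
Proof. by elim: m => [|m IH] //=; rewrite qbinom_small // subnn mul1r IH add0r. Qed.

Section Expansion.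
Variables q x y : R.

Let term m i := qbinom q m i * q ^+ 'C(i, 2) * x ^+ i * y ^+ (m - i).

Let termSS m i : term m.+1 i.+1 = y * term m i.+1 + x * q ^+ m * term m i.
Proof.
rewrite /term qbinomSS binS bin1 addnC exprD.
case: (ltngtP i m) => [lt_im | lt_mi | ->].
- have e : (m - i = (m - i.+1).+1)%N by rewrite subnSK.
  have em : q ^+ m = q ^+ (m - i.+1).+1 * q ^+ i by rewrite -exprD -e subnK // ltnW.
  by rewrite subSS e em !exprS; ring.
- by rewrite (qbinom_small q lt_mi) (qbinom_small q (leqW lt_mi)); ring.
- by rewrite qbinom_small // !subnn !mul0r mulr0 add0r exprS; ring.
Qed.

Lemma qbinomial m :
  \prod_(i < m) (y + x * q ^+ i) = \sum_(i < m.+1) term m i.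
Proof.
elim: m => [|m IH]; first by rewrite big_ord0 big_ord1 /term qbinom0 !expr0 !mulr1.
have shift : term m 0 + \sum_(i < m.+1) term m i.+1 = \sum_(i < m.+1) term m i.
  rewrite big_ord_recr [RHS]big_ord_recl /=.
  have -> : term m m.+1 = 0 by rewrite /term qbinom_small // !mul0r.
  rewrite addr0.
  by congr (_ + _); apply: eq_bigr => i _; rewrite lift0.
rewrite big_ord_recr /= IH [RHS]big_ord_recl.
under [in RHS]eq_bigr => i _ do rewrite lift0 termSS.
rewrite big_split /= -!mulr_sumr -shift.
have -> : term m.+1 0 = y * term m 0 by rewrite /term !qbinom0 !subn0 exprS; ring.
ring.
Qed.

End Expansion.

Lemma qbinom_qpoch q m i : (i <= m)%N ->
  qbinom q m i * qpoch q i * qpoch q (m - i) = qpoch q m.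
Proof.
elim: m i => [|m IH] [|i] //; rewrite ?qbinom0 ?qpoch0 ?subn0 ?mul1r ?mulr1 //.
rewrite ltnS leq_eqVlt => /orP[/eqP ->|lt_im].
  by rewrite qbinomSS qbinom_small // !subnn qbinomnn qpoch0 add0r !mul1r mulr1.
have IH1 := IH _ lt_im; have IH2 := IH _ (ltnW lt_im).
rewrite subSS -(subnSK lt_im) !qpochS in IH1 IH2 *.
set k := (m - i.+1)%N in IH1 IH2 *.
have eQ : q ^+ m.+1 = q ^+ k.+1 * q ^+ i.+1 by rewrite -exprD addSn subnK.
rewrite qbinomSS -(subnSK lt_im) eQ.
transitivity (qbinom q m i.+1 * (qpoch q i * (1 - q ^+ i.+1)) * qpoch q k * (1 - q ^+ k.+1)
  + q ^+ k.+1 * (qbinom q m i * qpoch q i * (qpoch q k * (1 - q ^+ k.+1))) * (1 - q ^+ i.+1)).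
  by ring.
by rewrite IH1 IH2; ring.
Qed.

Lemma prod_1DX_qpoch q k :
  \prod_(j < k) (1 + q ^+ j.+1) * qpoch q k = qpoch (q ^+ 2) k.
Proof.
elim: k => [|k IH]; first by rewrite big_ord0 !qpoch0 mulr1.
rewrite !qpochS big_ord_recr /= -IH -exprM mulnC exprM; ring.
Qed.

Lemma prod_1DXodd_qpoch q k :
  \prod_(j < k) (1 + q ^+ (2 * j + 1)) * qpoch q (k + k) * qpoch (q ^+ 4) k =
  qpoch (q ^+ 2) k * qpoch (q ^+ 2) (k + k).
Proof.
elim: k => [|k IH]; first by rewrite big_ord0 !qpoch0 !mulr1.
rewrite addSn addnS !qpochS big_ord_recr /= -!exprM.
set t := q ^+ (2 * k + 1).
have -> : q ^+ (4 * k.+1) = t * t * q ^+ 2 by rewrite /t -!exprD; congr (q ^+ _); lia.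
have -> : q ^+ (2 * k.+1) = t * q by rewrite /t -exprSr; congr (q ^+ _); lia.
have -> : q ^+ (2 * (k + k).+1) = t * t by rewrite /t -!exprD; congr (q ^+ _); lia.
have -> : q ^+ (2 * (k + k).+2) = t * t * q ^+ 2 by rewrite /t -!exprD; congr (q ^+ _); lia.
have -> : q ^+ (k + k).+2 = t * q by rewrite /t -exprSr; congr (q ^+ _); lia.
have -> : q ^+ (k + k).+1 = t by rewrite /t; congr (q ^+ _); lia.
move: IH; set A := \prod_(j < k) _; set B := qpoch q (k + k); set C := qpoch (q ^+ 4) k.
set D := qpoch (q ^+ 2) k; set E := qpoch (q ^+ 2) (k + k) => IH.
transitivity ((A * B * C) * ((1 + t) * (1 - t) * (1 - t * q) * (1 - t * t * q ^+ 2))).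
  by ring.
by rewrite IH; ring.
Qed.

End QBinomial.

(** * The ring of formal power series *)

HB.instance Definition _ := gen_eqMixin fps.
HB.instance Definition _ := gen_choiceMixin fps.

Lemma fps_ext (a b : fps) : (forall n, a n = b n) -> a = b.
Proof. exact: funext. Qed.

Definition fps_zero : fps := fun _ => 0.
Definition fps_opp (a : fps) : fps := fun n => - a n.

Lemma fps_addA : associative fps_add.
Proof. by move=> a b c; apply: fps_ext => n; rewrite /fps_add addrA. Qed.
Lemma fps_addC : commutative fps_add.
Proof. by move=> a b; apply: fps_ext => n; rewrite /fps_add addrC. Qed.
Lemma fps_add0 : left_id fps_zero fps_add.
Proof. by move=> a; apply: fps_ext => n; rewrite /fps_add add0r. Qed.
Lemma fps_addN : left_inverse fps_zero fps_opp fps_add.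
Proof. by move=> a; apply: fps_ext => n; rewrite /fps_add addNr. Qed.

HB.instance Definition _ :=
  GRing.isZmodule.Build fps fps_addA fps_addC fps_add0 fps_addN.

Definition eq_upto (N : nat) (a b : fps) := forall i, (i < N)%N -> a i = b i.

Lemma eq_upto_refl N a : eq_upto N a a. Proof. by []. Qed.
Arguments eq_upto_refl : clear implicits.
Lemma eq_upto_sym N a b : eq_upto N a b -> eq_upto N b a.
Proof. by move=> h i iN; rewrite h. Qed.
Lemma eq_upto_trans N a b c : eq_upto N a b -> eq_upto N b c -> eq_upto N a c.
Proof. by move=> h1 h2 i iN; rewrite h1 ?h2. Qed.
Lemma eq_upto_le M N a b : (M <= N)%N -> eq_upto N a b -> eq_upto M a b.
Proof. by move=> le_MN h i iM; apply/h/(leq_trans iM). Qed.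
Lemma eq_upto_all a b : (forall N, eq_upto N a b) -> a = b.
Proof. by move=> h; apply: fps_ext => n; apply: (h n.+1). Qed.

Lemma eq_upto_fps_mul N a a' b b' : eq_upto N a a' -> eq_upto N b b' ->
  eq_upto N (fps_mul a b) (fps_mul a' b').
Proof.
move=> ha hb i iN; apply: eq_bigr => j _.
rewrite ha ?hb //; last exact: leq_ltn_trans (ltnSE (ltn_ord j)) iN.
exact: leq_ltn_trans (leq_subr _ _) iN.
Qed.

Definition fps_of_poly (p : {poly int}) : fps := fun n => p`_n.

Lemma fps_of_polyM p r : fps_of_poly (p * r) = fps_mul (fps_of_poly p) (fps_of_poly r).
Proof. by apply: fps_ext => n; rewrite /fps_of_poly coefM. Qed.

Lemma eq_upto_trunc N a : eq_upto N a (fps_of_poly (\poly_(i < N) a i)).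
Proof. by move=> i iN; rewrite /fps_of_poly coef_poly iN. Qed.

(* The ring laws of the Cauchy product hold below every order N, where the
   series may be replaced by their truncations, i.e. by polynomials. *)
Lemma fps_mulA : associative fps_mul.
Proof.
move=> a b c; apply: eq_upto_all => N.
have ea := @eq_upto_trunc N a; have eb := @eq_upto_trunc N b.
have ec := @eq_upto_trunc N c.
apply: eq_upto_trans (eq_upto_fps_mul ea (eq_upto_fps_mul eb ec)) _.
rewrite -!fps_of_polyM mulrA !fps_of_polyM.
by apply: eq_upto_fps_mul; [apply: eq_upto_fps_mul|]; apply: eq_upto_sym.
Qed.

Lemma fps_mulC : commutative fps_mul.
Proof.
move=> a b; apply: eq_upto_all => N.
have ea := @eq_upto_trunc N a; have eb := @eq_upto_trunc N b.
apply: eq_upto_trans (eq_upto_fps_mul ea eb) _.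
by rewrite -fps_of_polyM mulrC fps_of_polyM; apply: eq_upto_fps_mul; apply: eq_upto_sym.
Qed.

Lemma fps_of_poly1 : fps_of_poly 1 = fps_one.
Proof. by apply: fps_ext => -[|n]; rewrite /fps_of_poly coef1. Qed.

Lemma fps_mul1 : left_id fps_one fps_mul.
Proof.
move=> a; apply: eq_upto_all => N; have ea := @eq_upto_trunc N a.
apply: eq_upto_trans (eq_upto_fps_mul (eq_upto_refl N fps_one) ea) _.
by rewrite -fps_of_poly1 -fps_of_polyM mul1r; apply: eq_upto_sym.
Qed.

Lemma fps_mulDl : left_distributive fps_mul fps_add.
Proof.
move=> a b c; apply: fps_ext => n; rewrite /fps_mul /fps_add -big_split /=.
by apply: eq_bigr => i _; rewrite mulrDl.
Qed.

Lemma fps_one_neq0 : fps_one != 0.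
Proof. by apply/eqP => /(congr1 (fun a : fps => a 0%N)). Qed.

HB.instance Definition _ := GRing.Zmodule_isComNzRing.Build fps
  fps_mulA fps_mulC fps_mul1 fps_mulDl fps_one_neq0.

Lemma fps_of_poly_is_zmod_morphism : zmod_morphism fps_of_poly.
Proof. by move=> p r; apply: fps_ext => n; rewrite /fps_of_poly coefB. Qed.

Lemma fps_of_poly_is_monoid_morphism : monoid_morphism fps_of_poly.
Proof. by split; [exact: fps_of_poly1|exact: fps_of_polyM]. Qed.

HB.instance Definition _ := GRing.isZmodMorphism.Build _ _ fps_of_poly
  fps_of_poly_is_zmod_morphism.
HB.instance Definition _ := GRing.isMonoidMorphism.Build _ _ fps_of_poly
  fps_of_poly_is_monoid_morphism.

Lemma coefD_fps n (a b : fps) : (a + b) n = a n + b n. Proof. by []. Qed.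
Lemma coefN_fps n (a : fps) : (- a) n = - a n. Proof. by []. Qed.
Lemma coefB_fps n (a b : fps) : (a - b) n = a n - b n. Proof. by []. Qed.
Lemma coefM_fps n (a b : fps) : (a * b) n = \sum_(i < n.+1) a i * b (n - i)%N.
Proof. by []. Qed.
Lemma coefMn_fps n (a : fps) k : (a *+ k) n = a n *+ k.
Proof. by elim: k => [|k IH]; rewrite ?mulr0n // !mulrS coefD_fps IH. Qed.
Lemma coef_natM_fps n k (a : fps) : (k%:R * a) n = k%:R * a n.
Proof. by rewrite mulr_natl coefMn_fps mulr_natl. Qed.
Lemma coef_sum_fps n I (r : seq I) (P : pred I) (F : I -> fps) :
  (\sum_(i <- r | P i) F i) n = \sum_(i <- r | P i) F i n.
Proof. by elim/big_rec2: _ => // i y1 y2 _ <-. Qed.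

Lemma fps_mulE (a b : fps) : fps_mul a b = a * b. Proof. by []. Qed.

Lemma fps_powE (a : fps) e : fps_pow a e = a ^+ e.
Proof. by elim: e => [|e IH] //=; rewrite exprS -IH. Qed.

Lemma fps_scaleE c (a : fps) : fps_scale c%:R a = c%:R * a.
Proof. by apply: fps_ext => n; rewrite coef_natM_fps. Qed.

Lemma eq_uptoD N (a a' b b' : fps) :
  eq_upto N a a' -> eq_upto N b b' -> eq_upto N (a + b) (a' + b').
Proof. by move=> ha hb i iN; rewrite !coefD_fps ha ?hb. Qed.
Lemma eq_uptoN N (a a' : fps) : eq_upto N a a' -> eq_upto N (- a) (- a').
Proof. by move=> ha i iN; rewrite !coefN_fps ha. Qed.
Lemma eq_uptoB N (a a' b b' : fps) :
  eq_upto N a a' -> eq_upto N b b' -> eq_upto N (a - b) (a' - b').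
Proof. by move=> ha hb; apply/eq_uptoD/eq_uptoN. Qed.
Lemma eq_uptoM N (a a' b b' : fps) :
  eq_upto N a a' -> eq_upto N b b' -> eq_upto N (a * b) (a' * b').
Proof. exact: eq_upto_fps_mul. Qed.
Lemma eq_uptoX N (a a' : fps) k : eq_upto N a a' -> eq_upto N (a ^+ k) (a' ^+ k).
Proof.
by move=> ha; elim: k => [|k IH]; rewrite ?expr0 // !exprS; apply: eq_uptoM.
Qed.
Lemma eq_upto_big_sum N I (r : seq I) (P : pred I) (F G : I -> fps) :
  (forall i, P i -> eq_upto N (F i) (G i)) ->
  eq_upto N (\sum_(i <- r | P i) F i) (\sum_(i <- r | P i) G i).
Proof. by move=> h; elim/big_rec2: _ => // i y1 y2 Pi; apply/eq_uptoD/h. Qed.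
Lemma eq_upto_sum0 N I (r : seq I) (P : pred I) (F : I -> fps) :
  (forall i, P i -> eq_upto N (F i) 0) -> eq_upto N (\sum_(i <- r | P i) F i) 0.
Proof. by move=> h i iN; rewrite coef_sum_fps big1 // => j Pj; apply: h. Qed.

(** * Powers of q, inverses and the products f_k *)

Lemma coef_qM (a : fps) n : (fps_q * a) n = if n is n'.+1 then a n' else 0.
Proof.
rewrite coefM_fps; case: n => [|n]; first by rewrite big_ord1 mul0r.
rewrite big_ord_recl /= mul0r add0r big_ord_recl /= mul1r subSS subn0 big1 ?addr0 //.
by move=> i _; rewrite mul0r.
Qed.

Lemma coef_qXnM (a : fps) e n : (fps_q ^+ e * a) (n + e)%N = a n.
Proof.
elim: e a => [|e IH] a; first by rewrite mul1r addn0.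
by rewrite exprS -mulrA addnS coef_qM IH.
Qed.

Lemma coef_qXnM_small (a : fps) e n : (n < e)%N -> (fps_q ^+ e * a) n = 0.
Proof.
elim: e a n => [|e IH] a [|n] //; rewrite exprS -mulrA coef_qM //.
by rewrite ltnS; apply: IH.
Qed.

Lemma qXnM_inj e (a b : fps) : fps_q ^+ e * a = fps_q ^+ e * b -> a = b.
Proof. by move=> eq_ab; apply: fps_ext => n; rewrite -(coef_qXnM a e) eq_ab coef_qXnM. Qed.

Lemma eq_upto_qXn0 N e : (N <= e)%N -> eq_upto N (fps_q ^+ e) 0.
Proof. by move=> le_Ne i iN; rewrite -[_ ^+ e]mulr1 coef_qXnM_small // (leq_trans iN). Qed.

Lemma coef_qXn e n : (fps_q ^+ e) n = (n == e)%:R.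
Proof.
have [lt_ne|le_en] := ltnP n e; first by rewrite -[_ ^+ e]mulr1 coef_qXnM_small // ltn_eqF.
have [k ->] : exists k, n = (k + e)%N by exists (n - e)%N; rewrite subnK.
by rewrite -[_ ^+ e]mulr1 coef_qXnM -{2}[e]add0n eqn_add2r.
Qed.

Lemma fps_of_polyXn e : fps_of_poly 'X^e = fps_q ^+ e.
Proof. by apply: fps_ext => n; rewrite coef_qXn /fps_of_poly coefXn. Qed.

Lemma fps_qM_shift (u : fps) : u 0%N = 0 -> u = fps_q * (fun n => u n.+1).
Proof. by move=> u0; apply: fps_ext => -[|n]; rewrite coef_qM. Qed.

(* [fps_inv a] is the geometric series in [1 - a], which has no constant term,
   so that only its first N terms matter below order N. *)
Lemma fps_invl (a : fps) : a 0%N = 1 -> fps_inv a * a = 1.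
Proof.
move=> a0; set u : fps := 1 - a.
have u0 : u 0%N = 0 by rewrite /u coefB_fps a0 subrr.
have uX_small j n : (n < j)%N -> (u ^+ j) n = 0.
  by move=> lt_nj; rewrite (fps_qM_shift u0) exprMn coef_qXnM_small.
apply: eq_upto_all => N; set S := \sum_(j < N) u ^+ j.
have eS : eq_upto N (fps_inv a) S.
  move=> n lt_nN; rewrite /S coef_sum_fps /fps_inv -(subnKC lt_nN) big_split_ord /=.
  rewrite [X in _ = _ + X]big1 ?addr0 => [|j _]; last by rewrite uX_small // ltnS leq_addr.
  by apply: eq_bigr => j _; rewrite fps_powE.
apply: eq_upto_trans (eq_uptoM eS (eq_upto_refl N a)) _.
have -> : a = 1 - u by rewrite /u opprB addrC subrK.
have -> : S * (1 - u) = 1 - u ^+ N by rewrite /S -opprB mulrN mulrC -subrX1 opprB.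
by move=> i lt_iN; rewrite coefB_fps uX_small // subr0.
Qed.

Lemma fps_inv_unique (x a : fps) : a 0%N = 1 -> x * a = 1 -> x = fps_inv a.
Proof. by move=> a0 xa1; rewrite -[x]mulr1 -(fps_invl a0) mulrCA xa1 mulr1. Qed.

Lemma coef_fk d n : fk d n = qpoch (fps_q ^+ d) n n.
Proof.
rewrite /fk -[LHS]/(fps_of_poly _ n) rmorph_prod /qpoch big_add1 /= big_mkord.
by congr (_ n); apply: eq_bigr => m _; rewrite rmorphB rmorph1 /= fps_of_polyXn -exprM mulnC.
Qed.

Lemma fk0 d : fk d 0 = 1.
Proof. by rewrite coef_fk qpoch0. Qed.

Lemma fk_invl d : fps_inv (fk d) * fk d = 1.
Proof. by rewrite fps_invl ?fk0. Qed.

Lemma qpoch_stable d n K : (0 < d)%N -> (n <= K)%N ->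
  eq_upto n.+1 (qpoch (fps_q ^+ d) K) (qpoch (fps_q ^+ d) n).
Proof.
move=> d_gt0; elim: K => [|K IH]; first by rewrite leqn0 => /eqP->.
rewrite leq_eqVlt => /orP[/eqP-> //|]; rewrite ltnS => le_nK.
rewrite qpochS -[qpoch _ n]mulr1; apply: eq_uptoM; first exact: IH.
rewrite -[1 in X in eq_upto _ _ X]subr0; apply: eq_uptoB; first exact: eq_upto_refl.
by rewrite -exprM; apply: eq_upto_qXn0; rewrite (leq_trans _ (leq_pmull _ d_gt0)).
Qed.

Lemma fk_qpoch d N K : (0 < d)%N -> (N <= K)%N ->
  eq_upto N (fk d) (qpoch (fps_q ^+ d) K).
Proof.
move=> d_gt0 le_NK n lt_nN; have le_nK := ltnW (leq_trans lt_nN le_NK).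
by rewrite coef_fk (qpoch_stable d_gt0 le_nK).
Qed.

(* Below order N the q-binomial coefficient [m choose i] in q^d tends to
   1/f_d when both i and m - i are at least N: its defining relation with the
   three q-Pochhammer symbols becomes [m choose i] f_d f_d = f_d. *)
Lemma qbinom_fk d N m i : (0 < d)%N -> (i <= m)%N -> (N <= i)%N -> (N <= m - i)%N ->
  eq_upto N (qbinom (fps_q ^+ d) m i * fk d) 1.
Proof.
move=> d_gt0 le_im le_Ni le_Nmi.
have e3 : eq_upto N (qbinom (fps_q ^+ d) m i * fk d * fk d) (fk d).
  apply: eq_upto_trans (eq_uptoM (eq_uptoM (eq_upto_refl _ _) (fk_qpoch d_gt0 le_Ni))
                                  (fk_qpoch d_gt0 le_Nmi)) _.
  by rewrite qbinom_qpoch //; apply/eq_upto_sym/fk_qpoch/(leq_trans le_Ni).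
have -> : qbinom (fps_q ^+ d) m i * fk d =
          qbinom (fps_q ^+ d) m i * fk d * fk d * fps_inv (fk d).
  by rewrite -mulrA [fk d * _]mulrC fk_invl mulr1.
by rewrite -(fk_invl d) [fps_inv _ * _]mulrC; apply: eq_uptoM e3 (eq_upto_refl _ _).
Qed.

Lemma sum_qbinom_fk d N m (c : nat -> fps) : (0 < d)%N ->
  (forall i, (i <= m)%N -> (i < N)%N || (m - i < N)%N -> eq_upto N (c i) 0) ->
  eq_upto N ((\sum_(i < m.+1) qbinom (fps_q ^+ d) m i * c i) * fk d)
            (\sum_(i < m.+1) c i).
Proof.
move=> d_gt0 c_small; rewrite mulr_suml; apply: eq_upto_big_sum => i _.
have le_im : (i <= m)%N by rewrite -ltnS.
case: (boolP ((i < N)%N || (m - i < N)%N)) => [small_i|].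
  apply: eq_upto_trans _ (eq_upto_sym (c_small _ le_im small_i)).
  have -> : (0 : fps) = qbinom (fps_q ^+ d) m i * 0 * fk d by rewrite mulr0 mul0r.
  apply: eq_uptoM _ (eq_upto_refl _ _).
  exact: eq_uptoM (eq_upto_refl _ _) (c_small _ le_im small_i).
rewrite negb_or -!leqNgt => /andP[le_Ni le_Nmi].
rewrite mulrAC -[c i in X in eq_upto _ _ X]mul1r.
exact: eq_uptoM (qbinom_fk d_gt0 le_im le_Ni le_Nmi) (eq_upto_refl _ _).
Qed.

(** * The theta functions phi and psi *)

Lemma eq_uptoMn N (a a' : fps) k : eq_upto N a a' -> eq_upto N (a *+ k) (a' *+ k).
Proof. by move=> ha i iN; rewrite !coefMn_fps ha. Qed.

Lemma eq_upto_mulr2n_inj N (a b : fps) : eq_upto N (a *+ 2) (b *+ 2) -> eq_upto N a b.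
Proof. by move=> h i iN; apply/eqP; rewrite -(eqr_pMn2r (isT : (0 < 2)%N)) -!coefMn_fps h. Qed.

Section Folding.
Variable V : nmodType.
Implicit Type f : nat -> V.

Lemma sum_distn f M :
  \sum_(i < (M + M).+1) f `|i - M|%N + f 0%N = (\sum_(k < M.+1) f k) *+ 2.
Proof.
rewrite -addnS big_split_ord /= (reindex_inj rev_ord_inj) /= mulr2n.
rewrite [X in _ = _ + X]big_ord_recl addrAC addrC; congr (_ + _).
  by apply: eq_bigr => i _; congr f; have := ltn_ord i; lia.
rewrite addrC; congr (_ + _); apply: eq_bigr => i _.
by rewrite lift0; congr f; have := ltn_ord i; lia.
Qed.

Lemma sum_fold f n :
  \sum_(i < (n + n.+1).+1) f ((n - i) + (i - n.+1))%N = (\sum_(k < n.+1) f k) *+ 2.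
Proof.
rewrite -addSn big_split_ord /= (reindex_inj rev_ord_inj) /= mulr2n.
by congr (_ + _); apply: eq_bigr => i _; congr f; have := ltn_ord i; lia.
Qed.

End Folding.

Lemma bin2_mul2 n : ('C(n, 2) * 2 = n * n.-1)%N.
Proof. by elim: n => // n IH; rewrite binS bin1 mulnDl IH; case: n {IH} => //= n; lia. Qed.

Definition tri k := 'C(k.+1, 2).

Lemma leq_tri k : (k <= tri k)%N.
Proof. by rewrite /tri binS bin1 leq_addl. Qed.

Lemma sum_id n : (\sum_(i < n) i = 'C(n, 2))%N.
Proof. by rewrite -bin2_sum big_mkord. Qed.

Lemma sum_double_id n : (\sum_(i < n.+1) 2 * i = n * n.+1)%N.
Proof. by rewrite -big_distrr /= sum_id mulnC bin2_mul2 mulnC. Qed.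

Lemma sqr_exponentE n i : (i <= n.+1 + n.+1)%N ->
  ('C(i, 2) * 2 + (2 * n + 1) * (n.+1 + n.+1 - i) =
   `|i - n.+1| ^ 2 + n * n.+1 + (2 * n + 1) * n.+1)%N.
Proof.
move=> le_i; have := bin2_mul2 i.
have [le_in|lt_ni] := leqP i n.+1.
  have -> : (`|i - n.+1| = n.+1 - i)%N by lia.
  by case: i le_i le_in => [|i] /= le_i le_in; nia.
have -> : (`|i - n.+1| = i - n.+1)%N by lia.
by case: i le_i lt_ni => [|i] /= le_i lt_ni; nia.
Qed.

Lemma tri_exponentE n i : (i <= n + n.+1)%N ->
  ('C(i, 2) + n * (n + n.+1 - i) = tri ((n - i) + (i - n.+1)) + ('C(n, 2) + n + n * n))%N.
Proof.
rewrite /tri => le_i; have h1 := bin2_mul2 i; have h2 := bin2_mul2 n.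
have [le_in|lt_ni] := leqP i n.
  have -> : ((n - i) + (i - n.+1) = n - i)%N by lia.
  have h3 := bin2_mul2 (n - i).+1.
  by case: i le_i le_in h1 h3 => [|i] /= le_i le_in h1 h3;
    case: n le_i le_in h2 h3 => [|n] /= le_i le_in h2 h3; nia.
have -> : ((n - i) + (i - n.+1) = i - n.+1)%N by lia.
have h3 := bin2_mul2 (i - n.+1).+1.
by case: i le_i lt_ni h1 h3 => [|i] /= le_i lt_ni h1 h3;
  case: n le_i lt_ni h2 h3 => [|n] /= le_i lt_ni h2 h3; nia.
Qed.

(* Both identities below are the q-binomial theorem with x = 1 and y a power
   of q, after factoring a power of q out of the product; they are finite
   forms of the Jacobi triple product. *)
Lemma prod_odd_sqr_qbinom n :
  (\prod_(j < n.+1) (1 + fps_q ^+ (2 * j + 1))) ^+ 2 =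
  \sum_(i < (n.+1 + n.+1).+1)
     qbinom (fps_q ^+ 2) (n.+1 + n.+1) i * fps_q ^+ (`|i - n.+1| ^ 2)%N.
Proof.
set P := \prod_(j < n.+1) _.
apply: (@qXnM_inj (n * n.+1 + (2 * n + 1) * n.+1)).
transitivity (\prod_(i < n.+1 + n.+1) (fps_q ^+ (2 * n + 1) + 1 * fps_q ^+ 2 ^+ i)).
  rewrite big_split_ord /=.
  rewrite (eq_bigr (fun i : 'I_n.+1 =>
    fps_q ^+ (2 * i) * (1 + fps_q ^+ (2 * (n - i) + 1)))); last first.
    move=> i _; rewrite mul1r -exprM mulrDr mulr1 -exprD addrC; congr (_ + fps_q ^+ _).
    by have := ltn_ord i; lia.
  rewrite [X in _ = _ * X](eq_bigr (fun j : 'I_n.+1 =>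
    fps_q ^+ (2 * n + 1) * (1 + fps_q ^+ (2 * j + 1)))); last first.
    by move=> j _; rewrite mul1r -exprM mulrDr mulr1 -exprD; congr (_ + fps_q ^+ _); lia.
  rewrite !big_split /=.
  have -> : \prod_(i < n.+1) (1 + fps_q ^+ (2 * (n - i) + 1)) = P.
    rewrite (reindex_inj rev_ord_inj); apply: eq_bigr => i _ /=.
    by rewrite subSS subKn // -ltnS.
  by rewrite prodrXr prodr_const card_ord sum_double_id exprD -exprM -/P; ring.
rewrite qbinomial mulr_sumr; apply: eq_bigr => i _.
rewrite expr1n mulr1 -!exprM -mulrA -exprD mulrCA -exprD; congr (_ * fps_q ^+ _).
by have := sqr_exponentE (ltnSE (ltn_ord i)); lia.
Qed.

Lemma prod_sqr_qbinom n :
  (\prod_(k < n) (1 + fps_q ^+ k.+1)) ^+ 2 *+ 2 =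
  \sum_(i < (n + n.+1).+1) qbinom fps_q (n + n.+1) i * fps_q ^+ tri ((n - i) + (i - n.+1)).
Proof.
set P := \prod_(k < n) _.
apply: (@qXnM_inj ('C(n, 2) + n + n * n)).
transitivity (\prod_(i < n + n.+1) (fps_q ^+ n + 1 * fps_q ^+ i)).
  rewrite big_split_ord /=.
  rewrite (eq_bigr (fun i : 'I_n => fps_q ^+ i * (1 + fps_q ^+ (n - i)))); last first.
    move=> i _; rewrite mul1r mulrDr mulr1 -exprD addrC subnKC //.
    exact: ltnW (ltn_ord i).
  rewrite big_ord_recl [X in _ = _ * (_ * X)](eq_bigr (fun j : 'I_n =>
    fps_q ^+ n * (1 + fps_q ^+ j.+1))); last first.
    by move=> j _; rewrite mul1r mulrDr mulr1 -exprD lift0 addnS.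
  rewrite !big_split /=.
  have -> : \prod_(i < n) (1 + fps_q ^+ (n - i)) = P.
    rewrite (reindex_inj rev_ord_inj); apply: eq_bigr => i _ /=.
    by rewrite subKn.
  rewrite prodrXr prodr_const card_ord sum_id addn0 mul1r -/P -mulr2n !exprD -exprM.
  ring.
rewrite qbinomial mulr_sumr; apply: eq_bigr => i _.
rewrite expr1n mulr1 -!exprM -mulrA -exprD mulrCA -exprD; congr (_ * fps_q ^+ _).
by have := tri_exponentE (ltnSE (ltn_ord i)); lia.
Qed.

Definition fps_cauchy (s : nat -> fps) :=
  forall N K, (N <= K)%N -> eq_upto N (s K) (s N).

Definition fps_limit (s : nat -> fps) : fps := fun n => s n.+1 n.

Lemma eq_upto_limit s N K : fps_cauchy s -> (N <= K)%N -> eq_upto N (fps_limit s) (s K).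
Proof. by move=> s_cauchy le_NK i lt_iN; rewrite (s_cauchy i.+1 K) // (leq_trans lt_iN). Qed.

Lemma fps_cauchy_sum_qX (g : nat -> nat) : (forall k, k <= g k)%N ->
  fps_cauchy (fun n => \sum_(k < n) fps_q ^+ g k).
Proof.
move=> le_g N K le_NK /=; rewrite -(subnKC le_NK) big_split_ord /= -[X in eq_upto _ _ X]addr0.
apply: eq_uptoD (eq_upto_refl _ _) _.
apply: eq_upto_sum0 => i _; apply: eq_upto_qXn0.
exact: leq_trans (leq_addr _ _) (le_g _).
Qed.

Definition phi_partial n : fps := (\sum_(k < n) fps_q ^+ (k ^ 2)) *+ 2 - 1.
Definition psi_partial n : fps := \sum_(k < n) fps_q ^+ tri k.

Definition phi : fps := locked (fps_limit phi_partial).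
Definition psi : fps := locked (fps_limit psi_partial).

Lemma phi_eq_upto N K : (N <= K)%N -> eq_upto N phi (phi_partial K).
Proof.
rewrite /phi -lock; apply: eq_upto_limit => {}N {}K le_NK; apply: eq_uptoB (eq_upto_refl _ _).
apply: eq_uptoMn; move: N K le_NK; apply: (fps_cauchy_sum_qX (g := fun k => (k ^ 2)%N)) => k.
by case: k => // k; rewrite expnS expn1 leq_pmulr.
Qed.

Lemma psi_eq_upto N K : (N <= K)%N -> eq_upto N psi (psi_partial K).
Proof. by rewrite /psi -lock; apply/eq_upto_limit/fps_cauchy_sum_qX/leq_tri. Qed.

(* Below order N, phi is the symmetric sum of q^(k^2) over |k| <= 2N + 1,
   hence (finite Jacobi triple product) a sum of Gaussian polynomials in q^2
   whose limiting coefficient is 1/f_2. *)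
Lemma phi_prod : phi * fk 1 ^+ 2 * fk 4 ^+ 2 = fk 2 ^+ 5.
Proof.
apply: eq_upto_all => N.
set n := (N + N)%N; set m := (n.+1 + n.+1)%N.
set P := \prod_(j < n.+1) (1 + fps_q ^+ (2 * j + 1)).
have phiP : eq_upto N phi (P ^+ 2 * fk 2).
  apply: eq_upto_trans (phi_eq_upto (_ : N <= n.+2)%N) _; first lia.
  rewrite /phi_partial -(sum_distn (fun k => fps_q ^+ (k ^ 2))) expr0 addrK.
  rewrite prod_odd_sqr_qbinom; apply: eq_upto_sym.
  apply: (sum_qbinom_fk (c := fun i => fps_q ^+ (`|i - n.+1| ^ 2)%N)) => // i le_im small_i.
  by apply: eq_upto_qXn0; rewrite /m /n in le_im small_i; nia.
have f1 : eq_upto N (fk 1) (qpoch fps_q m) by rewrite -[fps_q]expr1; apply: fk_qpoch; lia.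
have f2 : eq_upto N (fk 2) (qpoch (fps_q ^+ 2) n.+1) by apply: fk_qpoch; lia.
have f2' : eq_upto N (fk 2) (qpoch (fps_q ^+ 2) m) by apply: fk_qpoch; lia.
have f4 : eq_upto N (fk 4) (qpoch (fps_q ^+ 4) n.+1) by apply: fk_qpoch; lia.
apply: eq_upto_trans (eq_uptoM (eq_uptoM phiP (eq_uptoX 2 f1)) (eq_uptoX 2 f4)) _.
have -> : P ^+ 2 * fk 2 * qpoch fps_q m ^+ 2 * qpoch (fps_q ^+ 4) n.+1 ^+ 2 =
          fk 2 * (P * qpoch fps_q m * qpoch (fps_q ^+ 4) n.+1) ^+ 2 by ring.
rewrite prod_1DXodd_qpoch -/m [fk 2 ^+ 5](_ : _ = fk 2 * (fk 2 * fk 2) ^+ 2); last by ring.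
by apply/eq_uptoM/eq_uptoX/eq_uptoM; apply: eq_upto_sym.
Qed.

Lemma psi_prod : psi * fk 1 = fk 2 ^+ 2.
Proof.
apply: eq_upto_all => N; apply: eq_upto_mulr2n_inj.
set n := (N + N)%N; set E := \prod_(k < n) (1 + fps_q ^+ k.+1).
have psi2E : eq_upto N (psi *+ 2) (E ^+ 2 *+ 2 * fk 1).
  apply: eq_upto_trans (eq_uptoMn 2 (psi_eq_upto (_ : N <= n.+1)%N)) _; first lia.
  rewrite /psi_partial -(sum_fold (fun k => fps_q ^+ tri k)) prod_sqr_qbinom.
  apply: eq_upto_sym.
  apply: (sum_qbinom_fk (d := 1) (c := fun i => fps_q ^+ tri ((n - i) + (i - n.+1))))
    => // i le_i small_i.
  apply: eq_upto_qXn0; apply: leq_trans (leq_tri _); rewrite /n in le_i small_i; lia.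
have f1 : eq_upto N (fk 1) (qpoch fps_q n) by rewrite -[fps_q]expr1; apply: fk_qpoch; lia.
have f2 : eq_upto N (fk 2) (qpoch (fps_q ^+ 2) n) by apply: fk_qpoch; lia.
rewrite -mulrnAl; apply: eq_upto_trans (eq_uptoM psi2E f1) _.
have -> : E ^+ 2 *+ 2 * fk 1 * qpoch fps_q n =
          (E * qpoch fps_q n) * (E * fk 1) *+ 2 by rewrite -mulrnAl; ring.
apply: eq_upto_trans (eq_uptoMn 2 (eq_uptoM (eq_upto_refl _ _) (eq_uptoM (eq_upto_refl _ _) f1))) _.
by rewrite prod_1DX_qpoch; apply/eq_uptoMn/eq_upto_sym/eq_uptoX.
Qed.

(** * The substitution q -> q^2 and 2-dissections *)

Definition fps_dil (a : fps) : fps := fun n => if odd n then 0 else a n./2.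

Lemma eq_upto_dil N a b : eq_upto N a b -> eq_upto (N + N) (fps_dil a) (fps_dil b).
Proof. by move=> h i lt_i; rewrite /fps_dil; case: ifP => // _; apply: h; rewrite -divn2; lia. Qed.

Lemma eq_upto_dil_le N a b : eq_upto N a b -> eq_upto N (fps_dil a) (fps_dil b).
Proof. by move/eq_upto_dil/eq_upto_le; apply; rewrite leq_addr. Qed.

Lemma fps_dil_poly p : fps_dil (fps_of_poly p) = fps_of_poly (p \Po 'X^2).
Proof.
apply: fps_ext => n; rewrite /fps_dil /fps_of_poly coef_comp_poly_Xn // dvdn2 divn2.
by case: (odd n).
Qed.

Lemma fps_dil_is_zmod_morphism : zmod_morphism fps_dil.
Proof.
by move=> a b; apply: fps_ext => n; rewrite /fps_dil !coefB_fps; case: (odd n); rewrite ?subr0.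
Qed.

Lemma fps_dil_is_monoid_morphism : monoid_morphism fps_dil.
Proof.
split; first by rewrite -(rmorph1 fps_of_poly) /= fps_dil_poly -polyC1 comp_polyC.
move=> a b; apply: eq_upto_all => M; apply: (@eq_upto_le _ (M + M)); first exact: leq_addl.
have ea := @eq_upto_trunc M a; have eb := @eq_upto_trunc M b.
apply: eq_upto_trans (eq_upto_dil (eq_uptoM ea eb)) _.
rewrite -rmorphM /= fps_dil_poly comp_polyM rmorphM /= -!fps_dil_poly.
by apply: eq_uptoM; apply/eq_upto_sym/eq_upto_dil.
Qed.

HB.instance Definition _ := GRing.isZmodMorphism.Build _ _ fps_dil
  fps_dil_is_zmod_morphism.
HB.instance Definition _ := GRing.isMonoidMorphism.Build _ _ fps_dil
  fps_dil_is_monoid_morphism.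

Lemma fps_dilq : fps_dil fps_q = fps_q ^+ 2.
Proof.
have eX : fps_of_poly 'X = fps_q by rewrite -[X in fps_of_poly X]expr1 fps_of_polyXn expr1.
by rewrite -eX fps_dil_poly comp_polyX rmorphXn.
Qed.

Lemma fps_dil_qpoch d K : fps_dil (qpoch (fps_q ^+ d) K) = qpoch (fps_q ^+ (2 * d)) K.
Proof.
rewrite rmorph_prod; apply: eq_bigr => m _.
by rewrite rmorphB rmorph1 !rmorphXn /= fps_dilq exprM.
Qed.

Lemma fps_dil_fk d : (0 < d)%N -> fps_dil (fk d) = fk (2 * d).
Proof.
move=> d_gt0; apply: eq_upto_all => M; apply: (@eq_upto_le _ (M + M)); first exact: leq_addl.
apply: eq_upto_trans (eq_upto_dil (fk_qpoch d_gt0 (leq_addr M M))) _.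
by rewrite fps_dil_qpoch; apply/eq_upto_sym/fk_qpoch; rewrite ?muln_gt0.
Qed.

Lemma fps_dil_inv a : a 0%N = 1 -> fps_dil (fps_inv a) = fps_inv (fps_dil a).
Proof. by move=> a0; apply: fps_inv_unique => //; rewrite -rmorphM fps_invl ?rmorph1. Qed.

Lemma fps_dil_inv_fk d : (0 < d)%N -> fps_dil (fps_inv (fk d)) = fps_inv (fk (2 * d)).
Proof. by move=> d_gt0; rewrite fps_dil_inv ?fk0 // fps_dil_fk. Qed.

Lemma coef_dissection_even a b n : (fps_dil a + fps_q * fps_dil b) (n + n)%N = a n.
Proof.
rewrite coefD_fps coef_qM /fps_dil addnn odd_double doubleK.
by case: n => [|n] /=; rewrite ?odd_double addr0.
Qed.

(* Strong induction: the n-th coefficient of v(q^2) involves only v_(n/2). *)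
Lemma eq_opp_dil0 v : v = - fps_dil v -> v = 0.
Proof.
move=> vE; apply: fps_ext => n; elim: n {-2}n (leqnn n) => [|k IH] n le_nk.
  move: le_nk; rewrite leqn0 => /eqP->; have /eqP := congr1 (fun a : fps => a 0%N) vE.
  by rewrite coefN_fps /fps_dil /= -subr_eq0 opprK -mulr2n -mulr_natl mulf_eq0 => /eqP.
rewrite vE coefN_fps /fps_dil; case: ifP => [_|odd_n]; first by rewrite oppr0.
by rewrite IH ?oppr0 // -divn2; lia.
Qed.

Lemma fps_dilqX e : fps_dil (fps_q ^+ e) = fps_q ^+ (2 * e).
Proof. by rewrite rmorphXn /= fps_dilq -exprM. Qed.

Lemma sum_even_odd (V : nmodType) (f : nat -> V) M :
  \sum_(k < M + M) f k = \sum_(l < M) (f (2 * l)%N + f (2 * l + 1)%N).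
Proof.
elim: M => [|M IH]; first by rewrite !big_ord0.
rewrite addSn addnS !big_ord_recr /= IH -addrA; congr (_ + (f _ + f _)); lia.
Qed.

Lemma phi_partial_double N : phi_partial (N + N) =
  fps_dil (fps_dil (phi_partial N)) + fps_q * fps_dil (fps_dil (fps_dil (psi_partial N))) *+ 2.
Proof.
rewrite /phi_partial /psi_partial !rmorphB !rmorph1 !rmorphMn !rmorph_sum /=.
rewrite (sum_even_odd (fun k => fps_q ^+ (k ^ 2))) big_split /= mulr_sumr mulrnDl addrAC.
congr (_ *+ 2 - _ + _ *+ 2).
  by apply: eq_bigr => l _; rewrite !fps_dilqX; congr (fps_q ^+ _); lia.
apply: eq_bigr => l _; rewrite !fps_dilqX -exprS; congr (fps_q ^+ _).
by rewrite /tri; have := bin2_mul2 l.+1; simpl; nia.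
Qed.

Lemma phi_dissection :
  phi = fps_dil (fps_dil phi) + fps_q * fps_dil (fps_dil (fps_dil psi)) *+ 2.
Proof.
apply: eq_upto_all => N.
apply: eq_upto_trans (phi_eq_upto (leq_addr N N)) _; rewrite phi_partial_double.
apply: eq_uptoD.
  by do 2 apply: eq_upto_dil_le; apply/eq_upto_sym/phi_eq_upto.
apply: eq_uptoMn; apply: eq_uptoM (eq_upto_refl _ _) _; do 3 apply: eq_upto_dil_le.
by apply/eq_upto_sym/psi_eq_upto.
Qed.

Lemma phiE : phi = fk 2 ^+ 5 * fps_inv (fk 1) ^+ 2 * fps_inv (fk 4) ^+ 2.
Proof.
have -> : phi = phi * (fps_inv (fk 1) * fk 1) ^+ 2 * (fps_inv (fk 4) * fk 4) ^+ 2.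
  by rewrite !fk_invl !expr1n !mulr1.
by rewrite -phi_prod; ring.
Qed.

Lemma psiE : psi = fk 2 ^+ 2 * fps_inv (fk 1).
Proof.
have -> : psi = psi * (fps_inv (fk 1) * fk 1) by rewrite fk_invl mulr1.
by rewrite -psi_prod; ring.
Qed.

Lemma phi_dil_psi : phi * fps_dil psi = psi ^+ 2.
Proof.
have dil_f2 : fps_dil (fk 2) = fk 4 := fps_dil_fk (isT : (0 < 2)%N).
have dil_if1 : fps_dil (fps_inv (fk 1)) = fps_inv (fk 2) := fps_dil_inv_fk (isT : (0 < 1)%N).
rewrite phiE psiE rmorphM rmorphXn /= dil_f2 dil_if1.
transitivity (fk 2 ^+ 4 * fps_inv (fk 1) ^+ 2 * (fps_inv (fk 2) * fk 2) *
              (fps_inv (fk 4) * fk 4) ^+ 2); first by ring.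
by rewrite !fk_invl expr1n !mulr1; ring.
Qed.

(* phi(q)^2 - phi(q^2)^2 - 4 q psi(q^4)^2 is anti-invariant under q -> q^2, by
   the dissection of phi and phi(q) psi(q^2) = psi(q)^2. *)
Lemma phi_sqr : phi ^+ 2 = fps_dil phi ^+ 2 + fps_q * fps_dil (fps_dil psi) ^+ 2 *+ 4.
Proof.
set V := phi ^+ 2 - fps_dil phi ^+ 2 - fps_q * fps_dil (fps_dil psi) ^+ 2 *+ 4.
suff V0 : V = 0 by apply/eqP; rewrite -subr_eq0; apply/eqP; rewrite -V0 /V; ring.
apply: eq_opp_dil0.
have cross : fps_dil (fps_dil phi) * fps_dil (fps_dil (fps_dil psi)) = fps_dil (fps_dil psi) ^+ 2.
  by rewrite -!rmorphM /= phi_dil_psi !(rmorphXn fps_dil).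
have phi2 : phi ^+ 2 = fps_dil (fps_dil phi) ^+ 2 + fps_q * fps_dil (fps_dil psi) ^+ 2 *+ 4 +
                       fps_q ^+ 2 * fps_dil (fps_dil (fps_dil psi)) ^+ 2 *+ 4.
  by rewrite -cross {1}phi_dissection; ring.
by rewrite /V !rmorphB !rmorphMn !rmorphXn !rmorphM /= fps_dilq phi2; ring.
Qed.

(** * The even part of f4^3 / (f1^6 f2^3) *)

Lemma dissection_cube a b :
  (fps_dil a + fps_q * fps_dil b) ^+ 3 =
  fps_dil (a ^+ 3 + fps_q * a * b ^+ 2 *+ 3) + fps_q * fps_dil (a ^+ 2 * b *+ 3 + fps_q * b ^+ 3).
Proof. by rewrite rmorphD rmorphMn rmorphD rmorphMn !rmorphXn !rmorphM /= fps_dilq; ring. Qed.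

Lemma coef_dissection_cube_even c a b n :
  (fps_dil c * (fps_dil a + fps_q * fps_dil b) ^+ 3) (n + n)%N =
  (c * (a ^+ 3 + fps_q * a * b ^+ 2 *+ 3)) n.
Proof.
by rewrite dissection_cube mulrDr -rmorphM [fps_dil c * _]mulrCA -rmorphM /= coef_dissection_even.
Qed.

Lemma btbar_seriesE :
  btbar_series = fps_dil (fk 2 ^+ 9 * fps_inv (fk 1) ^+ 18) * phi ^+ 3.
Proof.
have dil_f2 : fps_dil (fk 2) = fk 4 := fps_dil_fk (isT : (0 < 2)%N).
have dil_if1 : fps_dil (fps_inv (fk 1)) = fps_inv (fk 2) := fps_dil_inv_fk (isT : (0 < 1)%N).
rewrite /btbar_series !fps_mulE !fps_powE phiE rmorphM !rmorphXn /= dil_f2 dil_if1.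
transitivity (fk 4 ^+ 3 * (fps_inv (fk 1) ^+ 6 * fps_inv (fk 2) ^+ 3) *
              (fps_inv (fk 2) * fk 2) ^+ 15 * (fps_inv (fk 4) * fk 4) ^+ 6).
  by rewrite !fk_invl !expr1n !mulr1.
by ring.
Qed.

Lemma btbar_even n :
  btbar (2 * n) = (fk 2 ^+ 9 * fps_inv (fk 1) ^+ 18 *
    (fps_dil phi * (fps_dil phi ^+ 2 + fps_q * fps_dil (fps_dil psi) ^+ 2 *+ 12))) n.
Proof.
rewrite /btbar btbar_seriesE {1}phi_dissection -mulrnAr -rmorphMn mul2n -addnn.
by rewrite coef_dissection_cube_even; apply: (congr1 (fun a : fps => a n)); ring.
Qed.

Lemma dil_phiE : fps_dil phi = fk 4 ^+ 5 * fps_inv (fk 2) ^+ 2 * fps_inv (fk 8) ^+ 2.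
Proof. by rewrite phiE rmorphM rmorphM !rmorphXn /= !fps_dil_fk // !fps_dil_inv_fk. Qed.

Lemma dil_psiE : fps_dil psi = fk 4 ^+ 2 * fps_inv (fk 2).
Proof. by rewrite psiE rmorphM rmorphXn /= fps_dil_fk // fps_dil_inv_fk. Qed.

Lemma dil2_psiE : fps_dil (fps_dil psi) = fk 8 ^+ 2 * fps_inv (fk 4).
Proof. by rewrite dil_psiE rmorphM rmorphXn /= fps_dil_fk // fps_dil_inv_fk. Qed.

Lemma eta_quotient_expand (R : comNzRingType) (q f2 f4 f8 g1 g2 g4 g8 : R) :
  g2 * f2 = 1 -> g4 * f4 = 1 -> g8 * f8 = 1 ->
  f2 ^+ 9 * g1 ^+ 18 * (f4 ^+ 5 * g2 ^+ 2 * g8 ^+ 2 *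
    ((f2 ^+ 5 * g1 ^+ 2 * g4 ^+ 2) ^+ 2 + q * (f8 ^+ 2 * g4) ^+ 2 *+ 8)) =
  8%:R * (q * (f2 ^+ 7 * (f4 ^+ 3 * (f8 ^+ 2 * g1 ^+ 18)))) +
  f2 ^+ 17 * (f4 * (g1 ^+ 22 * g8 ^+ 2)).
Proof.
move=> i2 i4 i8.
transitivity (f2 ^+ 17 * f4 * g1 ^+ 22 * g8 ^+ 2 * (g2 * f2) ^+ 2 * (g4 * f4) ^+ 4 +
  8%:R * q * f2 ^+ 7 * f4 ^+ 3 * f8 ^+ 2 * g1 ^+ 18 * (g2 * f2) ^+ 2 * (g4 * f4) ^+ 2 *
  (g8 * f8) ^+ 2); first by ring.
by rewrite i2 i4 i8 !expr1n !mulr1; ring.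
Qed.

Lemma btbar_even_prod n :
  btbar (2 * n) =
  (8%:R * (fps_q * (fk 2 ^+ 7 * (fk 4 ^+ 3 * (fk 8 ^+ 2 * fps_inv (fk 1) ^+ 18)))) +
   fk 2 ^+ 17 * (fk 4 * (fps_inv (fk 1) ^+ 22 * fps_inv (fk 8) ^+ 2))) n.
Proof.
rewrite btbar_even.
have -> : fps_dil phi ^+ 2 + fps_q * fps_dil (fps_dil psi) ^+ 2 *+ 12 =
          phi ^+ 2 + fps_q * fps_dil (fps_dil psi) ^+ 2 *+ 8 by rewrite phi_sqr; ring.
rewrite dil_phiE phiE dil2_psiE; apply: (congr1 (fun a : fps => a n)).
exact: eta_quotient_expand (fk_invl 2) (fk_invl 4) (fk_invl 8).
Qed.

Theorem mainTheorem5 :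
  forall n : nat,
    btbar (2 * n)%N =
    fps_add
      (fps_scale 8 (fps_mul fps_q
         (fps_mul (fps_pow (fk 2) 7) (fps_mul (fps_pow (fk 4) 3)
           (fps_mul (fps_pow (fk 8) 2) (fps_pow (fps_inv (fk 1)) 18))))))
      (fps_mul (fps_pow (fk 2) 17) (fps_mul (fk 4)
         (fps_mul (fps_pow (fps_inv (fk 1)) 22) (fps_pow (fps_inv (fk 8)) 2)))) n.
Proof.
by move=> n; rewrite btbar_even_prod fps_scaleE !fps_mulE !fps_powE.
Qed.
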